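(* Let $k\geq 1$ be an integer and let $G$ be a connected graph with $G=G_1\bigoplus_k G_2$ (a $k$-clique-sum of $G_1$ and $G_2$ along a vertex set $S'$ with $|S'|=k$). Then: (1) $G_i$ is connected for each $i\in\{1,2\}$; (2) for each $i\in\{1,2\}$ and every $S\subseteq V(G_i)$, $\omega(G_i-S)\leq \omega(G-S)$; (3) if $G_i\not\cong K_k$ for each $i\in\{1,2\}$, then $S'$ is a vertex-cut of $G$.
   Context: $\omega(H)$ denotes the number of components of a graph $H$. If $H$ is a simple graph with induced subgraphs $H_1,H_2$ and $S\subseteq V(H)$ such that $V(H)=V(H_1)\cup V(H_2)$, $E(H)=E(H_1)\cup E(H_2)$ and $S=V(H_1)\cap V(H_2)$, then $H$ is obtained by pasting $H_1$ and $H_2$ along $S$. A graph $G$ is a $k$-clique-sum of $G_1$ and $G_2$, written $G_1\bigoplus_k G_2$, if $G$ is obtained by pasting together two graphs $G_1'$ and $G_2'$ along a set $S'$ of order $k$, and for each $i\in\{1,2\}$, $G_i$ is obtained from $G_i'$ by extending $G_i'[S']$ to a clique of order $k$ (so $V(G_i)=V(G_i')\subseteq V(G)$). $S'$ is called the vertex set with respect to the clique-sum. A vertex-cut is a set of vertices whose removal increases the number of components. *)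

From mathcomp Require Import all_boot.
Set Implicit Arguments. Unset Strict Implicit. Unset Printing Implicit Defensive.

(* A finite simple graph is a symmetric irreflexive relation e on a finType T;
   a graph "with vertex set A" is (A, e restricted to A). *)

Definition restr (T : finType) (e : rel T) (A : {set T}) : rel T :=
  fun x y => [&& x \in A, y \in A & e x y].

Definition comp_of (T : finType) (e : rel T) (A : {set T}) (x : T) : {set T} :=
  [set y in A | connect (restr e A) x y].

Definition ncomp (T : finType) (e : rel T) (A : {set T}) : nat :=
  #|[set comp_of e A x | x in A]|.

Definition gconnected (T : finType) (e : rel T) (A : {set T}) : Prop :=
  ncomp e A = 1.

(* G = (T, e) is obtained by pasting G[V1] and G[V2] along V1 :&: V2 with
   |V1 :&: V2| = k, i.e. G is a k-clique-sum with respect to V1, V2. *)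
Definition clique_sum_split (T : finType) (e : rel T) (V1 V2 : {set T}) (k : nat)
  : Prop :=
  [/\ V1 :|: V2 = setT, #|V1 :&: V2| = k &
      forall x y, e x y -> (x \in V1) && (y \in V1) || (x \in V2) && (y \in V2)].

(* edge relation of G_i: G[V_i] with G[S'] extended to a clique, S' = V1 :&: V2
   (vertex set of G_i is Vi) *)
Definition cs_part (T : finType) (e : rel T) (V1 V2 Vi : {set T}) : rel T :=
  fun x y => [&& x \in Vi, y \in Vi &
     e x y || [&& x \in V1 :&: V2, y \in V1 :&: V2 & x != y]].

Definition iso_complete (T : finType) (e : rel T) (A : {set T}) (k : nat) : Prop :=
  exists f : 'I_k -> T,
    [/\ injective f, forall x, x \in A <-> exists i, f i = x &
        forall i j, e (f i) (f j) = (i != j)].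

From mathcomp Require Import all_boot.

Set Implicit Arguments. Unset Strict Implicit. Unset Printing Implicit Defensive.

(* Write K = V1 :&: V2.  A path of G - S leaves V1 and comes back only
   through K :\: S, whose vertices are pairwise adjacent in G1.  So collapsing
   every vertex outside V1 onto one vertex of K :\: S maps the components of
   G - S onto those of G1 - S, and if K :\: S is empty then no path of G - S
   starting in V1 leaves V1 at all.  This gives (2), and (1) is the case
   S = set0.  For (3), a graph G1 other than K_k has a vertex outside V2, and
   no edge of G - K leaves V1 :\: V2. *)

Section RestrictedGraphs.

Variable T : finType.
Implicit Types (r : rel T) (A B D : {set T}).

Lemma restr_sym r A : symmetric r -> symmetric (restr r A).
Proof. by move=> sym_r x y; rewrite /restr sym_r andbCA. Qed.

Lemma connect_homo_in r (r' : rel T) D (f : T -> T) :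
    (forall u v, u \in D -> r u v -> v \in D /\ connect r' (f u) (f v)) ->
  forall x y, x \in D -> connect r x y -> connect r' (f x) (f y).
Proof.
move=> f_homo x _ xD /connectP [p r_p ->].
elim: p x xD r_p => [|z p IHp] x xD //= /andP [r_xz r_p].
have [zD c_xz] := f_homo x z xD r_xz.
exact: connect_trans c_xz (IHp z zD r_p).
Qed.

Lemma comp_of_connect r A x y :
  symmetric r -> connect (restr r A) x y -> comp_of r A x = comp_of r A y.
Proof.
move=> sym_r c_xy; have sym_c := sym_connect_sym (restr_sym A sym_r).
apply/setP => z; rewrite !inE; congr (_ && _).
apply/idP/idP; last exact: connect_trans.
by apply: connect_trans; rewrite sym_c.
Qed.

Lemma ncomp_gt0 r A x : x \in A -> 0 < ncomp r A.
Proof. by move=> xA; apply/card_gt0P; exists (comp_of r A x); apply: imset_f. Qed.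

Lemma ncomp_gt1 r A x y :
  x \in A -> y \in A -> ~~ connect (restr r A) x y -> 1 < ncomp r A.
Proof.
move=> xA yA n_xy; apply/card_gt1P.
exists (comp_of r A x), (comp_of r A y); split; try exact: imset_f.
apply: contraNneq n_xy => eq_xy.
have : y \in comp_of r A y by rewrite inE yA connect0.
by rewrite -eq_xy inE => /andP [].
Qed.

Lemma leq_ncomp_retract r (r' : rel T) A B D (p : T -> T) :
    symmetric r' -> B \subset A -> B \subset D -> {in B, forall x, p x = x} ->
    (forall u v, u \in D -> restr r A u v ->
       v \in D /\ connect (restr r' B) (p u) (p v)) ->
  ncomp r' B <= ncomp r A.
Proof.
move=> sym_r' sBA sBD p_id p_homo.
pose F (C : {set T}) := if [pick z in C] is Some z then comp_of r' B (p z) else set0.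
rewrite /ncomp; apply: (leq_trans _ (leq_imset_card F _)); apply: subset_leq_card.
apply/subsetP => _ /imsetP [x xB ->]; apply/imsetP.
exists (comp_of r A x); first by rewrite imset_f // (subsetP sBA).
rewrite /F; case: pickP => [z | /(_ x)]; last by rewrite inE (subsetP sBA) ?connect0.
rewrite inE => /andP [_ c_xz].
have := connect_homo_in p_homo (subsetP sBD x xB) c_xz.
by rewrite p_id //; apply: comp_of_connect.
Qed.

Lemma iso_complete_clique r A :
  {in A &, forall x y, r x y = (x != y)} -> iso_complete r A #|A|.
Proof.
move=> r_clique; exists enum_val; split.
- exact: enum_val_inj.
- move=> x; split; last by case=> i <-; apply: enum_valP.
  by move=> xA; exists (enum_rank_in xA x); rewrite enum_rankK_in.
- by move=> i j; rewrite r_clique ?enum_valP // (inj_eq enum_val_inj).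
Qed.

End RestrictedGraphs.

Lemma clique_sum_splitC (T : finType) (e : rel T) V1 V2 k :
  clique_sum_split e V1 V2 k -> clique_sum_split e V2 V1 k.
Proof.
case=> cover card_K e_split; split; rewrite 1?setUC 1?setIC //.
by move=> x y /e_split; rewrite orbC.
Qed.

Lemma cs_partC (T : finType) (e : rel T) V1 V2 Vi :
  cs_part e V1 V2 Vi = cs_part e V2 V1 Vi.
Proof. by rewrite /cs_part setIC. Qed.

Section CliqueSum.

Variables (T : finType) (e : rel T) (V1 V2 : {set T}) (k : nat).
Hypothesis sym_e : symmetric e.
Hypothesis cs_split : clique_sum_split e V1 V2 k.

Local Notation K := (V1 :&: V2).
Local Notation G1 := (cs_part e V1 V2 V1).

Lemma cs_part_sym : symmetric G1.
Proof.
move=> x y; rewrite /cs_part sym_e [y == x]eq_sym.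
by case: (x \in V1); case: (y \in V1); case: (x \in K); case: (y \in K).
Qed.

Lemma crossing_edge u v : u \in V1 -> v \notin V1 -> e u v -> u \in K.
Proof.
case: cs_split => cover _ e_split uV1 vV1 /e_split.
by rewrite (negbTE vV1) andbF /= inE uV1 => /andP [].
Qed.

Lemma K_clique_edge u v : u \in K -> v \in K -> u != v -> G1 u v.
Proof.
move=> uK vK neq_uv; rewrite /cs_part uK vK neq_uv orbT !andbT.
by move: uK vK; rewrite !inE => /andP [-> _] /andP [-> _].
Qed.

Lemma cs_part_edge u v : u \in V1 -> v \in V1 -> e u v -> G1 u v.
Proof. by move=> uV1 vV1 e_uv; rewrite /cs_part uV1 vV1 e_uv. Qed.

Lemma ncomp_cs_part_le_meet (S : {set T}) s :
  s \in K :\: S -> ncomp G1 (V1 :\: S) <= ncomp e (~: S).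
Proof.
move=> sKS; pose p v := if v \in V1 then v else s.
have KS_connect u v : u \in K :\: S -> v \in K :\: S ->
    connect (restr G1 (V1 :\: S)) u v.
  move=> uKS vKS; have [-> // | neq_uv] := eqVneq u v; apply: connect1.
  move: uKS vKS; rewrite !in_setD => /andP [uS uK] /andP [vS vK].
  have sKV1 := subsetP (subsetIl V1 V2).
  by rewrite /restr !in_setD uS vS !sKV1 // K_clique_edge.
apply: (leq_ncomp_retract (D := setT) (p := p) cs_part_sym (subsetDr V1 S)) => //.
  by move=> x; rewrite /p inE => /andP [_ ->].
move=> u v _; rewrite /restr !inE => /and3P [uS vS e_uv]; split=> //.
rewrite /p; case: ifPn => uV1; case: ifPn => vV1.
- by apply: connect1; rewrite /restr !inE uS vS uV1 vV1 cs_part_edge.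
- by apply: KS_connect; rewrite // in_setD uS (crossing_edge uV1 vV1 e_uv).
- by apply: KS_connect; rewrite // in_setD vS (crossing_edge vV1 uV1) // sym_e.
- exact: connect0.
Qed.

Lemma ncomp_cs_part_le_cut (S : {set T}) :
  K \subset S -> ncomp G1 (V1 :\: S) <= ncomp e (~: S).
Proof.
move=> sKS.
apply: (leq_ncomp_retract (D := V1 :\: S) (p := id) cs_part_sym (subsetDr V1 S)) => //.
move=> u v; rewrite /restr !inE => /andP [uS uV1] /and3P [_ vS e_uv].
have vV1 : v \in V1.
  apply: contraT => vV1; apply: contraR uS => _.
  exact: subsetP sKS u (crossing_edge uV1 vV1 e_uv).
split; first by rewrite vS vV1.
by apply: connect1; rewrite /restr !inE uS vS uV1 vV1 cs_part_edge.
Qed.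

Lemma ncomp_cs_part_le S : ncomp G1 (V1 :\: S) <= ncomp e (~: S).
Proof.
have [/eqP | /set0Pn [s sKS]] := eqVneq (K :\: S) set0.
  by rewrite setD_eq0; apply: ncomp_cs_part_le_cut.
exact: ncomp_cs_part_le_meet sKS.
Qed.

Lemma cs_part_connected : 0 < k -> gconnected e setT -> gconnected G1 V1.
Proof.
case: cs_split => _ card_K _ k_gt0 conn_G.
have [s sK] : exists s, s \in K by apply/card_gt0P; rewrite card_K.
apply/eqP; rewrite eqn_leq (ncomp_gt0 _ (subsetP (subsetIl V1 V2) s sK)) andbT.
by have := ncomp_cs_part_le set0; rewrite setD0 setC0 conn_G.
Qed.

Lemma cs_part_complete : irreflexive e -> V1 \subset V2 -> iso_complete G1 V1 k.
Proof.
case: cs_split => _ card_K _ irr_e sV12.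
have V1_K : V1 = K by apply/esym/setIidPl.
rewrite -card_K -V1_K; apply: iso_complete_clique => x y xV1 yV1.
rewrite /cs_part -V1_K xV1 yV1 /=.
by have [-> | neq_xy] := eqVneq x y; rewrite ?irr_e ?neq_xy ?orbT.
Qed.

Lemma cs_sides_disconnected a b :
  a \in V1 -> a \notin V2 -> b \notin V1 -> ~~ connect (restr e (~: K)) a b.
Proof.
move=> aV1 aV2 bV1; have sym_c := sym_connect_sym (restr_sym (~: K) sym_e).
have closed_side : closed (restr e (~: K)) (V1 :\: V2).
  apply: intro_closed => // u v; rewrite /restr !inE.
  move=> /and3P [_ vK e_uv] /andP [uV2 uV1].
  have vV1 : v \in V1.
    apply: contraT => vV1.
    by move: (crossing_edge uV1 vV1 e_uv); rewrite inE (negbTE uV2) andbF.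
  by move: vK; rewrite vV1 /= => ->.
by apply/negP => /(closed_connect closed_side); rewrite !inE aV2 aV1 (negbTE bV1) andbF.
Qed.

End CliqueSum.

Theorem lemma2p1 (T : finType) (e : rel T) (V1 V2 : {set T}) (k : nat) :
  1 <= k ->
  symmetric e -> irreflexive e ->
  clique_sum_split e V1 V2 k ->
  gconnected e setT ->
  [/\ (* (1) *)
      gconnected (cs_part e V1 V2 V1) V1 /\ gconnected (cs_part e V1 V2 V2) V2,
      (* (2) *)
      (forall S : {set T}, S \subset V1 ->
         ncomp (cs_part e V1 V2 V1) (V1 :\: S) <= ncomp e (~: S)) /\
      (forall S : {set T}, S \subset V2 ->
         ncomp (cs_part e V1 V2 V2) (V2 :\: S) <= ncomp e (~: S)) &
      (* (3) *)
      (~ iso_complete (cs_part e V1 V2 V1) V1 k ->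
       ~ iso_complete (cs_part e V1 V2 V2) V2 k ->
       ncomp e setT < ncomp e (~: (V1 :&: V2)))].
Proof.
move=> k_gt0 sym_e irr_e split12 conn_G.
have split21 := clique_sum_splitC split12.
rewrite [cs_part e V1 V2 V2]cs_partC; split.
- split; first exact: (cs_part_connected sym_e split12 k_gt0 conn_G).
  exact: (cs_part_connected sym_e split21 k_gt0 conn_G).
- split=> S _; first exact: (ncomp_cs_part_le sym_e split12).
  exact: (ncomp_cs_part_le sym_e split21).
rewrite conn_G => G1_noncomplete G2_noncomplete.
have /subsetPn [a aV1 aV2] : ~~ (V1 \subset V2).
  by apply/negP => /(cs_part_complete split12 irr_e)/G1_noncomplete.
have /subsetPn [b bV2 bV1] : ~~ (V2 \subset V1).
  by apply/negP => /(cs_part_complete split21 irr_e)/G2_noncomplete.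
apply: (ncomp_gt1 (x := a) (y := b)); rewrite ?inE ?negb_and ?aV2 ?bV1 ?orbT //.
exact: (cs_sides_disconnected sym_e split12 aV1 aV2 bV1).
Qed.
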